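(* Let $A\in\mathbb{R}^{n\times d}$ with largest singular value $\sigma_1$, $S\in\mathbb{R}^{d\times m}$, $\lambda>0$, and let $f:\mathbb{R}^n\to\mathbb{R}$ be convex, differentiable and $L$-Lipschitz (its gradient is not assumed Lipschitz). Let $x^*$ be the unique minimizer of $x\mapsto f(Ax)+\frac{\lambda}{2}\|x\|_2^2$, let $\alpha^*$ be any minimizer of $\alpha\mapsto f(AS\alpha)+\frac{\lambda}{2}\|S\alpha\|_2^2$, and set $\widetilde{x}=-\frac{1}{\lambda}A^\top\nabla f(AS\alpha^* )$. Then $$\|\widetilde{x}-x^*\|_2\le\frac{6L}{\lambda}\sqrt{\sigma_1 Z_f}.$$
   Context: $f^*(z)=\sup_w\{w^\top z-f(w)\}$ is the Fenchel conjugate of $f$ with domain $\mathrm{dom} f^*$. $z^*=\nabla f(Ax^* )$. $P_S=S(S^\top S)^\dagger S^\top$, $P_S^\perp=I_d-P_S$, and $Z_f=Z_f(A,S)=\sup_{\Delta\in(\mathrm{dom} f^*-z^* ),\,\Delta\ne0}\left(\frac{\Delta^\top AP_S^\perp A^\top\Delta}{\|\Delta\|_2^2}\right)^{1/2}$. *)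

From Stdlib Require Import Reals.
From mathcomp Require Import all_boot.
Set Implicit Arguments. Unset Strict Implicit. Unset Printing Implicit Defensive.
Local Open Scope R_scope.

Definition vec (n : nat) := 'I_n -> R.
Definition mat (n d : nat) := 'I_n -> 'I_d -> R.

Definition sumI (n : nat) (F : 'I_n -> R) : R :=
  foldr (fun i acc => F i + acc) 0 (enum 'I_n).

Definition dot {n} (u v : vec n) : R := sumI (fun i => u i * v i).
Definition norm2 {n} (u : vec n) : R := sqrt (dot u u).
Definition vadd {n} (u v : vec n) : vec n := fun i => u i + v i.
Definition vsub {n} (u v : vec n) : vec n := fun i => u i - v i.
Definition vscale {n} (a : R) (u : vec n) : vec n := fun i => a * u i.
Definition vzero {n} : vec n := fun _ => 0.

Definition mv {n d} (A : mat n d) (x : vec d) : vec n :=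
  fun i => sumI (fun j => A i j * x j).
Definition tr {n d} (A : mat n d) : mat d n := fun j i => A i j.
Definition mm {n d m} (A : mat n d) (B : mat d m) : mat n m :=
  fun i k => sumI (fun j => A i j * B j k).
Definition idm {d} : mat d d := fun i j => if i == j then 1 else 0.
Definition msub {n d} (A B : mat n d) : mat n d := fun i j => A i j - B i j.

Definition convex {n} (f : vec n -> R) : Prop :=
  forall x y t, 0 <= t <= 1 ->
    f (vadd (vscale t x) (vscale (1 - t) y)) <= t * f x + (1 - t) * f y.

Definition lipschitz {n} (L : R) (f : vec n -> R) : Prop :=
  forall x y, Rabs (f x - f y) <= L * norm2 (vsub x y).

Definition is_gradient {n} (f : vec n -> R) (g : vec n -> vec n) : Prop :=
  forall x eps, 0 < eps -> exists delta, 0 < delta /\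
    forall h, 0 < norm2 h < delta ->
      Rabs (f (vadd x h) - f x - dot (g x) h) <= eps * norm2 h.

Definition is_minimizer {T} (F : T -> R) (x : T) : Prop := forall y, F x <= F y.

Definition is_largest_singular_value {n d} (A : mat n d) (sigma : R) : Prop :=
  0 <= sigma /\
  ((d = 0%nat /\ sigma = 0) \/
   (exists v : vec d, v <> vzero /\ mv (mm (tr A) A) v = vscale (sigma ^ 2) v)) /\
  (forall (mu : R) (v : vec d), v <> vzero -> mv (mm (tr A) A) v = vscale mu v ->
       mu <= sigma ^ 2).

Definition is_pinv {m k} (M : mat m k) (Mp : mat k m) : Prop :=
  mm (mm M Mp) M = M /\ mm (mm Mp M) Mp = Mp /\
  tr (mm M Mp) = mm M Mp /\ tr (mm Mp M) = mm Mp M.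

Definition PS {d m} (S : mat d m) (Mp : mat m m) : mat d d := mm (mm S Mp) (tr S).
Definition PSperp {d m} (S : mat d m) (Mp : mat m m) : mat d d := msub idm (PS S Mp).

(* z in dom f^* : the supremum defining f^*(z) is finite *)
Definition in_dom_conj {n} (f : vec n -> R) (z : vec n) : Prop :=
  exists M, forall w, dot w z - f w <= M.

(* values whose supremum is Z_f (0 added, convention sup of empty set = 0;
   all the other values are >= 0, so this changes nothing otherwise) *)
Definition Zf_values {n d m} (f : vec n -> R) (zstar : vec n) (A : mat n d)
    (S : mat d m) (Mp : mat m m) (r : R) : Prop :=
  r = 0 \/
  exists z : vec n, in_dom_conj f z /\
    let Delta := vsub z zstar in
    Delta <> vzero /\
    r = sqrt (dot Delta (mv A (mv (PSperp S Mp) (mv (tr A) Delta))) / (norm2 Delta ^ 2)).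

(* Write z* = grad f at A x*, z^ = grad f at A S alpha*, b = A^T z*,
   delta = A^T z^ - b, P = P_S and Q = P_S^perp = I - P.  The first-order
   optimality conditions of the two problems give lambda x* = -b, hence
   x~ - x* = -delta/lambda, and lambda S alpha* = -P A^T z^.  Monotonicity of
   grad f (convexity) turns these into delta^T P delta <= delta^T Q b.  By
   Cauchy-Schwarz, the definition of Z_f (applicable since z^ belongs to the
   domain of the conjugate of f), the bound ||grad f|| <= L (Lipschitz
   continuity) and ||A^T v|| <= sigma_1 ||v||, both
   delta^T Q b <= 2 L^2 Z_f sigma_1 and delta^T Q delta <= 4 L^2 Z_f sigma_1,
   so ||delta||^2 <= 6 L^2 sigma_1 Z_f: the theorem holds even with sqrt 6 in
   place of 6. *)

From Stdlib Require Import Reals Lra FunctionalExtensionality.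
From mathcomp Require Import all_boot all_order all_algebra.
From mathcomp Require all_classical all_reals.
From mathcomp Require topology normedtype derive.
From mathcomp Require Import Rstruct.
From mathcomp Require Rstruct_topology.
From mathcomp Require ring lra.
Set Implicit Arguments. Unset Strict Implicit. Unset Printing Implicit Defensive.

Module InnerProduct.
Import mathcomp.algebra_tactics.ring mathcomp.algebra_tactics.lra.
Import Order.TTheory GRing.Theory Num.Theory.
Local Open Scope ring_scope.

Definition ip {n} (u v : 'cV[R]_n) : R := (u^T *m v) 0 0.

Lemma ipE n (u v : 'cV[R]_n) : ip u v = \sum_i u i 0 * v i 0.
Proof. by rewrite /ip !mxE; apply: eq_bigr => i _; rewrite !mxE. Qed.

Lemma ipC n (u v : 'cV[R]_n) : ip u v = ip v u.
Proof. by rewrite !ipE; apply: eq_bigr => i _; rewrite mulrC. Qed.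

Lemma ipDr n (u v w : 'cV[R]_n) : ip u (v + w) = ip u v + ip u w.
Proof. by rewrite /ip mulmxDr mxE. Qed.

Lemma ipDl n (u v w : 'cV[R]_n) : ip (v + w) u = ip v u + ip w u.
Proof. by rewrite ipC ipDr !(ipC u). Qed.

Lemma ipNr n (u v : 'cV[R]_n) : ip u (- v) = - ip u v.
Proof. by rewrite /ip mulmxN mxE. Qed.

Lemma ipBr n (u v w : 'cV[R]_n) : ip u (v - w) = ip u v - ip u w.
Proof. by rewrite ipDr ipNr. Qed.

Lemma ipBl n (u v w : 'cV[R]_n) : ip (v - w) u = ip v u - ip w u.
Proof. by rewrite ipC ipBr !(ipC u). Qed.

Lemma ipZr n a (u v : 'cV[R]_n) : ip u (a *: v) = a * ip u v.
Proof. by rewrite /ip -scalemxAr mxE. Qed.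

Lemma ipZl n a (u v : 'cV[R]_n) : ip (a *: u) v = a * ip u v.
Proof. by rewrite ipC ipZr ipC. Qed.

Lemma ip0r n (u : 'cV[R]_n) : ip u 0 = 0.
Proof. by rewrite /ip mulmx0 mxE. Qed.

Lemma ip_trmx n k (M : 'M[R]_(n, k)) (u : 'cV[R]_n) (v : 'cV[R]_k) :
  ip u (M *m v) = ip (M^T *m u) v.
Proof. by rewrite /ip trmx_mul trmxK mulmxA. Qed.

Lemma ip_ge0 n (u : 'cV[R]_n) : 0 <= ip u u.
Proof. by rewrite ipE; apply: sumr_ge0 => i _; exact: sqr_ge0. Qed.

Lemma ip_eq0 n (u : 'cV[R]_n) : ip u u = 0 -> u = 0.
Proof.
rewrite ipE => /eqP; rewrite psumr_eq0; last by move=> i _; exact: sqr_ge0.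
move=> /allP u0; apply/matrixP => i j; rewrite mxE (ord1 j).
by apply/eqP; rewrite -sqrf_eq0 expr2; exact: u0 (mem_index_enum i).
Qed.

Lemma ip_nonneg_eq0 n (u : 'cV[R]_n) : (forall v, 0 <= ip u v) -> u = 0.
Proof.
move=> u_ge0; apply: ip_eq0; apply/eqP; rewrite eq_le ip_ge0 andbT.
by rewrite -oppr_ge0 -ipNr.
Qed.

Lemma ip_CauchySchwarz n (u v : 'cV[R]_n) : ip u v ^+ 2 <= ip u u * ip v v.
Proof.
have quad t : 0 <= ip u u - 2 * t * ip u v + t ^+ 2 * ip v v.
  by have := ip_ge0 (u - t *: v); rewrite !ipBl !ipBr !ipZl !ipZr (ipC v u); lra.
have [vv0|vv_neq0] := eqVneq (ip v v) 0.
  rewrite vv0 mulr0; have [->|uv_neq0] := eqVneq (ip u v) 0; first by rewrite expr0n.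
  have := quad ((ip u u + 1) / (2 * ip u v)); rewrite vv0 mulr0 addr0.
  have -> : 2 * ((ip u u + 1) / (2 * ip u v)) * ip u v = ip u u + 1 by field.
  lra.
have vv_gt0 : 0 < ip v v by rewrite lt_def vv_neq0 ip_ge0.
have := quad (ip u v / ip v v).
have -> : ip u u - 2 * (ip u v / ip v v) * ip u v + (ip u v / ip v v) ^+ 2 * ip v v
   = (ip u u * ip v v - ip u v ^+ 2) / ip v v by field.
move=> /mulr_ge0 /(_ (ltW vv_gt0)); rewrite divfK ?gt_eqF // subr_ge0.
exact.
Qed.

Lemma ip_sub_le n (u v : 'cV[R]_n) : ip (u - v) (u - v) <= 2 * ip u u + 2 * ip v v.
Proof.
have := ip_ge0 (u + v); rewrite ipBl !ipBr ipDl !ipDr (ipC v u).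
by set x := ip u u; set y := ip u v; set z := ip v v; lra.
Qed.

(* N^T N = 0 forces N = 0 (the diagonal of N^T N holds squared column norms). *)
Lemma trmx_mul_self_eq0 n k (N : 'M[R]_(n, k)) : N^T *m N = 0 -> N = 0.
Proof.
move=> NN0; apply/matrixP => i j; rewrite mxE.
have /eqP := congr1 (fun M : 'M[R]_k => M j j) NN0; rewrite !mxE.
rewrite psumr_eq0; last by move=> l _; rewrite mxE; exact: sqr_ge0.
move=> /allP /(_ i (mem_index_enum i)); rewrite mxE -expr2 sqrf_eq0.
by move/eqP.
Qed.

End InnerProduct.
Import InnerProduct.

Module Projection.
Import Order.TTheory GRing.Theory Num.Theory.
Local Open Scope ring_scope.

Definition penrose {m} (M X : 'M[R]_m) := [/\ M *m X *m M = M, X *m M *m X = X,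
  (M *m X)^T = M *m X & (X *m M)^T = X *m M].

Lemma penrose_uniq m (M X Y : 'M[R]_m) : penrose M X -> penrose M Y -> X = Y.
Proof.
move=> [P1 P2 P3 P4] [Q1 Q2 Q3 Q4].
have eX : X = X *m M *m Y.
  transitivity (X *m (M *m X)^T); first by rewrite P3 mulmxA P2.
  rewrite trmx_mul -{1}Q1 [(M *m Y *m M)^T]trmx_mul [(M *m Y)^T]trmx_mul.
  rewrite [X^T *m (M^T *m _)]mulmxA -[X^T *m M^T]trmx_mul -[Y^T *m M^T]trmx_mul P3 Q3.
  by rewrite !mulmxA P2.
have eY : Y = X *m M *m Y.
  transitivity ((Y *m M)^T *m Y); first by rewrite Q4 Q2.
  rewrite trmx_mul -{1}P1 [(M *m X *m M)^T]trmx_mul [(M *m X)^T]trmx_mul.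
  rewrite mulmxA -[M^T *m X^T]trmx_mul -[(X *m M)^T *m M^T *m Y^T]mulmxA.
  by rewrite -[M^T *m Y^T]trmx_mul P4 Q4 -mulmxA Q2.
by rewrite eX -eY.
Qed.

(* The pseudoinverse of a symmetric matrix is symmetric, since X^T also
   satisfies the Penrose conditions. *)
Lemma penrose_sym m (M X : 'M[R]_m) : M^T = M -> penrose M X -> X^T = X.
Proof.
move=> sM PX; have [P1 P2 P3 P4] := PX.
apply/esym/(penrose_uniq PX); split.
- by apply: trmx_inj; rewrite !trmx_mul !trmxK sM mulmxA P1.
- by apply: trmx_inj; rewrite !trmx_mul !trmxK sM mulmxA P2.
- by rewrite trmx_mul trmxK sM -P4 trmx_mul sM.
- by rewrite trmx_mul trmxK sM -P3 trmx_mul sM.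
Qed.

Section Projector.
Variables (d m : nat) (S : 'M[R]_(d, m)) (X : 'M[R]_m).
Hypothesis HX : penrose (S^T *m S) X.

Definition PSm := S *m X *m S^T.
Definition QSm := 1%:M - PSm.

Lemma pinv_sym : X^T = X.
Proof. by apply: penrose_sym HX; rewrite trmx_mul trmxK. Qed.

(* S X (S^T S) = S: the matrix S X (S^T S) - S = S (X S^T S - I) has zero Gram
   matrix by the first Penrose condition. *)
Lemma pinv_right_inverse : S *m X *m (S^T *m S) = S.
Proof.
have [P1 _ _ _] := HX; apply/subr0_eq.
have -> : S *m X *m (S^T *m S) - S = S *m (X *m (S^T *m S) - 1%:M).
  by rewrite mulmxBr mulmx1 !mulmxA.
apply: trmx_mul_self_eq0.
rewrite trmx_mul -mulmxA (mulmxA S^T) mulmxBr mulmx1.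
by rewrite [S^T *m S *m (X *m _)]mulmxA P1 subrr mulmx0.
Qed.

Lemma PS_sym : PSm^T = PSm.
Proof. by rewrite /PSm !trmx_mul trmxK pinv_sym mulmxA. Qed.

Lemma PS_S : PSm *m S = S.
Proof. by rewrite /PSm -mulmxA pinv_right_inverse. Qed.

Lemma PS_idem : PSm *m PSm = PSm.
Proof. by rewrite {2}/PSm !mulmxA PS_S. Qed.

Lemma QS_sym : QSm^T = QSm.
Proof. by rewrite /QSm linearB /= trmx1 PS_sym. Qed.

Lemma QS_idem : QSm *m QSm = QSm.
Proof. by rewrite {1}/QSm mulmxBl mul1mx /QSm mulmxBr mulmx1 PS_idem subrr subr0. Qed.

(* For a symmetric idempotent M, u^T M v = (M u)^T (M v). *)
Lemma ip_PS (u v : 'cV_d) : ip u (PSm *m v) = ip (PSm *m u) (PSm *m v).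
Proof. by rewrite ip_trmx PS_sym -{1}PS_idem -mulmxA ip_trmx PS_sym. Qed.

Lemma ip_QS (u v : 'cV_d) : ip u (QSm *m v) = ip (QSm *m u) (QSm *m v).
Proof. by rewrite ip_trmx QS_sym -{1}QS_idem -mulmxA ip_trmx QS_sym. Qed.

Lemma ip_split (u : 'cV_d) : ip u u = ip u (PSm *m u) + ip u (QSm *m u).
Proof. by rewrite -ipDr /QSm mulmxBl mul1mx addrC subrK. Qed.

Lemma QS_contraction (u : 'cV_d) : ip (QSm *m u) (QSm *m u) <= ip u u.
Proof. by rewrite [leRHS]ip_split -ip_QS ip_PS lerDr ip_ge0. Qed.

End Projector.
End Projection.
Import Projection.

Module OperatorNorm.
Import all_classical all_reals topology normedtype derive Rstruct_topology.
Import mathcomp.algebra_tactics.ring mathcomp.algebra_tactics.lra.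
Import Order.TTheory GRing.Theory Num.Theory.
Import numFieldTopology.Exports numFieldNormedType.Exports.
Local Open Scope classical_set_scope.
Local Open Scope ring_scope.

Lemma continuous_sqnorm n d (A : 'M[R]_(n, d)) :
  continuous (fun y : 'rV[R]_d => ip (A *m y^T) (A *m y^T)).
Proof.
have entry i : continuous (fun y : 'rV[R]_d => (A *m y^T) i 0).
  have -> : (fun y : 'rV[R]_d => (A *m y^T) i 0) =
      fun y => \sum_(j <- index_enum 'I_d) A i j * y 0 j.
    by apply: funext => y; rewrite mxE; apply: eq_bigr => j _; rewrite mxE.
  apply: continuous_big => [|j _]; first exact: (@add_continuous R^o).
  by move=> y; apply: continuousM; [exact: cst_continuous|exact: coord_continuous].
have -> : (fun y : 'rV[R]_d => ip (A *m y^T) (A *m y^T)) =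
    fun y => \sum_(i <- index_enum 'I_n) (A *m y^T) i 0 * (A *m y^T) i 0.
  by apply: funext => y; rewrite ipE.
apply: continuous_big => [|i _]; first exact: (@add_continuous R^o).
by move=> y; apply: continuousM; exact: entry.
Qed.

(* Each coordinate is bounded by the Euclidean norm; the unit sphere thus lies
   in the cube [-1, 1]^d. *)
Lemma coord_sq_le d (y : 'rV[R]_d) i : y 0 i ^+ 2 <= ip y^T y^T.
Proof.
rewrite ipE (bigD1 i) //= !mxE -expr2 lerDl.
by apply: sumr_ge0 => j _; rewrite !mxE -expr2; exact: sqr_ge0.
Qed.

(* By compactness of the unit sphere, |A v| attains its maximum there. *)
Lemma sphere_maximiser n d (A : 'M[R]_(n, d.+1)) :
  exists2 c : 'cV[R]_d.+1, ip c c = 1 &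
    forall v, ip v v = 1 -> ip (A *m v) (A *m v) <= ip (A *m c) (A *m c).
Proof.
pose K := [set y : 'rV[R]_d.+1 | ip y^T y^T = 1].
have K0 : K !=set0.
  exists (delta_mx 0 ord0); rewrite /K /= /ip trmxK trmx_delta mul_delta_mx mxE.
  by rewrite !eqxx.
have Kclosed : closed K.
  have -> : K = (fun y => ip (1%:M *m y^T) (1%:M *m y^T)) @^-1` [set x | x = 1].
    by apply/seteqP; split => y; rewrite /K /= mul1mx.
  apply: preimage_closed; last exact: closed_eq.
  by move=> y _; exact: continuous_sqnorm.
have Kcompact : compact K.
  have cube := rV_compact (fun _ : 'I_d.+1 => @segment_compact R (-1) 1).
  apply: (subclosed_compact Kclosed cube) => y /= Ky i; rewrite /= in_itv /=.
  have := coord_sq_le y i; rewrite Ky => y2_le1.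
  by rewrite -ler_norml -(@expr_le1 _ 2) // -normrX ger0_norm // sqr_ge0.
have cont : {within K, continuous (fun y => ip (A *m y^T) (A *m y^T))}.
  by apply: continuous_subspaceT => y; exact: continuous_sqnorm.
have [c cK cmax] := EVT_max_rV K0 Kcompact cont.
exists c^T; first by move: cK; rewrite inE.
by move=> v v1; rewrite -[v]trmxK; apply: cmax; rewrite inE /K /= trmxK.
Qed.

(* A maximiser c of |A v| on the unit sphere gives the Rayleigh bound and is
   an eigenvector of A^T A for the maximal value mu. *)
Section Rayleigh.
Variables (n d : nat) (A : 'M[R]_(n, d)) (c : 'cV[R]_d).
Let mu := ip (A *m c) (A *m c).
Hypothesis c_unit : ip c c = 1.
Hypothesis c_max : forall v, ip v v = 1 -> ip (A *m v) (A *m v) <= mu.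

Lemma rayleigh_bound v : ip (A *m v) (A *m v) <= mu * ip v v.
Proof.
have [vv0|vv_neq0] := eqVneq (ip v v) 0.
  by rewrite (ip_eq0 vv0) mulmx0 !ip0r mulr0.
have vv_gt0 : 0 < ip v v by rewrite lt_def vv_neq0 ip_ge0.
pose s := Num.sqrt (ip v v).
have s_neq0 : s != 0 by rewrite gt_eqF // sqrtr_gt0.
have s2 : s ^+ 2 = ip v v by rewrite sqr_sqrtr // ltW.
have := c_max (v := s^-1 *: v).
rewrite -scalemxAr !ipZl !ipZr -s2 => /(_ ltac:(by field)) bound.
have -> : ip (A *m v) (A *m v) = (s^-1 * (s^-1 * ip (A *m v) (A *m v))) * s ^+ 2.
  by field.
by rewrite ler_wpM2r // sqr_ge0.
Qed.

(* With u = A^T A c - mu c (orthogonal to c), the bound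
   |A (c + t u)|^2 <= mu |c + t u|^2 reads 2 t |u|^2 + t^2 |A u|^2 <= mu t^2 |u|^2,
   which forces u = 0 for 0 < t < 1 / mu. *)
Lemma rayleigh_eigen : A^T *m (A *m c) = mu *: c.
Proof.
apply/eqP; rewrite -subr_eq0; apply/eqP.
set u := A^T *m (A *m c) - mu *: c.
have cu0 : ip c u = 0 by rewrite ipBr ipZr c_unit mulr1 ipC -ip_trmx subrr.
have Acu : ip (A *m c) (A *m u) = ip u u.
  rewrite ip_trmx -[A^T *m _](subrK (mu *: c)) -/u ipDl ipZl cu0.
  by rewrite mulr0 addr0.
clearbody u; have mu_ge0 : 0 <= mu by exact: ip_ge0.
pose t := (mu + 1)^-1.
have t_gt0 : 0 < t by rewrite invr_gt0; lra.
have mut : mu * t < 1 by rewrite ltr_pdivrMr; lra.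
apply: ip_eq0; have := rayleigh_bound (c + t *: u).
rewrite mulmxDr -scalemxAr !ipDl !ipDr !ipZl !ipZr Acu (ipC (A *m u)) Acu.
rewrite (ipC u c) cu0 c_unit -/mu !mulr0 !addr0.
have := ip_ge0 (A *m u); have := ip_ge0 u.
move: (ip (A *m u) (A *m u)) (ip u u) => q p p_ge0 q_ge0 ineq.
have tq_ge0 : 0 <= t * (t * q) by rewrite !mulr_ge0 // ltW.
have : t * (p * (2 - mu * t)) <= 0.
  have -> : t * (p * (2 - mu * t)) =
    (mu + t * p + (t * p + t * (t * q))) - mu * (1 + t * (t * p)) - t * (t * q).
    by ring.
  lra.
rewrite pmulr_rle0 // pmulr_lle0; last by lra.
by move=> p_le0; apply/eqP; rewrite eq_le p_le0 p_ge0.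
Qed.

End Rayleigh.

Lemma eigen_operator_bound n d (A : 'M[R]_(n, d)) (s : R) :
  (forall mu (v : 'cV_d), v != 0 -> (A^T *m A) *m v = mu *: v -> mu <= s ^+ 2) ->
  forall x : 'cV_d, ip (A *m x) (A *m x) <= s ^+ 2 * ip x x.
Proof.
case: d A => [|d] A eig_le x.
  by rewrite (_ : x = 0) ?mulmx0 ?ip0r ?mulr0 //; apply/matrixP => -[].
have [c c_unit c_max] := sphere_maximiser A.
apply: (le_trans (rayleigh_bound c_max x)); rewrite ler_wpM2r ?ip_ge0 //.
apply: (eig_le _ c); last by rewrite -mulmxA rayleigh_eigen.
by apply/eqP => c0; move: c_unit; rewrite c0 ip0r => /eqP; rewrite eq_sym oner_eq0.
Qed.

(* |A x|^2 <= s |x|^2 for all x implies the same bound for A^T, since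
   |A^T v|^4 = (v^T A A^T v)^2 <= |v|^2 |A A^T v|^2 <= |v|^2 s |A^T v|^2. *)
Lemma operator_bound_tr n d (A : 'M[R]_(n, d)) (s : R) : 0 <= s ->
  (forall x : 'cV_d, ip (A *m x) (A *m x) <= s * ip x x) ->
  forall v : 'cV_n, ip (A^T *m v) (A^T *m v) <= s * ip v v.
Proof.
move=> s_ge0 A_le v; set t := ip (A^T *m v) (A^T *m v).
have [t0|t_neq0] := eqVneq t 0; first by rewrite t0 mulr_ge0 ?ip_ge0.
have t_gt0 : 0 < t by rewrite lt_def t_neq0 ip_ge0.
have : t ^+ 2 <= ip v v * (s * t).
  rewrite {1}/t -ip_trmx; apply: (le_trans (ip_CauchySchwarz _ _)).
  by rewrite ler_wpM2l ?ip_ge0 ?A_le.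
by rewrite expr2 mulrCA mulrA ler_pM2r.
Qed.

End OperatorNorm.
Import OperatorNorm.

Module MatrixView.
Local Open Scope ring_scope.

Definition cv {n} (x : vec n) : 'cV[R]_n := \col_i x i.
Definition mx {n d} (A : mat n d) : 'M[R]_(n, d) := \matrix_(i, j) A i j.

Lemma sumIE n (F : 'I_n -> R) : sumI F = \sum_i F i.
Proof. by rewrite -big_enum /= /sumI unlock /reducebig. Qed.

Lemma cv_inj n (u v : vec n) : cv u = cv v -> u = v.
Proof.
by move=> /colP uv; apply: functional_extensionality => i; have := uv i; rewrite !mxE.
Qed.

Lemma cv_col n (v : 'cV[R]_n) : cv (fun i => v i 0) = v.
Proof. by apply/colP => i; rewrite mxE. Qed.

Lemma cv_vadd n (u v : vec n) : cv (vadd u v) = cv u + cv v.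
Proof. by apply/colP => i; rewrite !mxE. Qed.

Lemma cv_vsub n (u v : vec n) : cv (vsub u v) = cv u - cv v.
Proof. by apply/colP => i; rewrite !mxE. Qed.

Lemma cv_vscale n a (u : vec n) : cv (vscale a u) = a *: cv u.
Proof. by apply/colP => i; rewrite !mxE. Qed.

Lemma cv_vzero n : cv (@vzero n) = 0.
Proof. by apply/colP => i; rewrite !mxE. Qed.

Lemma cv_mv n d (A : mat n d) x : cv (mv A x) = mx A *m cv x.
Proof.
by apply/colP => i; rewrite !mxE /mv sumIE; apply: eq_bigr => j _; rewrite !mxE.
Qed.

Lemma mx_mm n d k (A : mat n d) (B : mat d k) : mx (mm A B) = mx A *m mx B.
Proof.
by apply/matrixP => i j; rewrite !mxE /mm sumIE; apply: eq_bigr => l _; rewrite !mxE.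
Qed.

Lemma mx_tr n d (A : mat n d) : mx (tr A) = (mx A)^T.
Proof. by apply/matrixP => i j; rewrite !mxE. Qed.

Lemma dot_ip n (u v : vec n) : dot u v = ip (cv u) (cv v).
Proof. by rewrite /dot sumIE ipE; apply: eq_bigr => j _; rewrite !mxE. Qed.

Lemma mx_PSperp d m (S : mat d m) (Mp : mat m m) :
  mx (PSperp S Mp) = QSm (mx S) (mx Mp).
Proof.
rewrite /QSm /PSm -mx_tr -!mx_mm; apply/matrixP => i j.
by rewrite !mxE /PSperp /msub /idm; case: eqP.
Qed.

Lemma pinv_penrose m k (S : mat k m) (Mp : mat m m) :
  is_pinv (mm (tr S) S) Mp -> penrose ((mx S)^T *m mx S) (mx Mp).
Proof.
rewrite -mx_tr -mx_mm => -[P1 [P2 [P3 P4]]].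
by split; rewrite -!mx_mm -?mx_tr ?P1 ?P2 ?P3 ?P4.
Qed.

End MatrixView.
Import MatrixView.

Module VectorAlgebra.
Local Open Scope R_scope.

Lemma dot_sym n (u v : vec n) : dot u v = dot v u.
Proof. by rewrite !dot_ip ipC. Qed.

Lemma dot_vadd_r n (u v w : vec n) : dot u (vadd v w) = dot u v + dot u w.
Proof. by rewrite !dot_ip cv_vadd ipDr. Qed.

Lemma dot_vsub_r n (u v w : vec n) : dot u (vsub v w) = dot u v - dot u w.
Proof. by rewrite !dot_ip cv_vsub ipBr. Qed.

Lemma dot_vscale_r n a (u v : vec n) : dot u (vscale a v) = a * dot u v.
Proof. by rewrite !dot_ip cv_vscale ipZr. Qed.

Lemma dot_vadd_l n (u v w : vec n) : dot (vadd v w) u = dot v u + dot w u.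
Proof. by rewrite dot_sym dot_vadd_r !(dot_sym u). Qed.

Lemma dot_vsub_l n (u v w : vec n) : dot (vsub v w) u = dot v u - dot w u.
Proof. by rewrite dot_sym dot_vsub_r !(dot_sym u). Qed.

Lemma dot_vscale_l n a (u v : vec n) : dot (vscale a v) u = a * dot v u.
Proof. by rewrite dot_sym dot_vscale_r !(dot_sym u). Qed.

Lemma dot_vzero_r n (u : vec n) : dot u vzero = 0.
Proof. by rewrite dot_ip cv_vzero ip0r. Qed.

Lemma dot_ge0 n (u : vec n) : 0 <= dot u u.
Proof. by rewrite dot_ip; apply/RleP; exact: ip_ge0. Qed.

Lemma dot_eq0 n (u : vec n) : dot u u = 0 -> u = vzero.
Proof. by rewrite dot_ip => /ip_eq0 u0; apply: cv_inj; rewrite u0 cv_vzero. Qed.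

Lemma norm2_sq n (u : vec n) : norm2 u ^ 2 = dot u u.
Proof. exact/pow2_sqrt/dot_ge0. Qed.

Lemma norm2_vscale n t (u : vec n) : norm2 (vscale t u) = Rabs t * norm2 u.
Proof.
rewrite /norm2 dot_vscale_l dot_vscale_r -Rmult_assoc sqrt_mult_alt.
  by rewrite -(sqrt_Rsqr_abs t).
exact: Rle_0_sqr.
Qed.

Lemma norm2_gt0 n (u : vec n) : dot u u <> 0 -> 0 < norm2 u.
Proof. by move=> uu_neq0; apply: sqrt_lt_R0; have := dot_ge0 u; lra. Qed.

Lemma convex_comb n (w y : vec n) t :
  vadd (vscale t w) (vscale (1 - t) y) = vadd y (vscale t (vsub w y)).
Proof. by apply: functional_extensionality => i; rewrite /vadd /vscale /vsub; ring. Qed.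

Lemma vadd_vscale_vzero n (y : vec n) t : vadd y (vscale t vzero) = y.
Proof. by apply: functional_extensionality => i; rewrite /vadd /vscale /vzero; ring. Qed.

End VectorAlgebra.
Import VectorAlgebra.

Module ConvexAnalysis.
Local Open Scope R_scope.

Lemma Rabs_le_lower x a : Rabs x <= a -> - a <= x.
Proof. by have := Rle_abs (- x); rewrite Rabs_Ropp; lra. Qed.

Section Differentiable.
Variables (n : nat) (f : vec n -> R) (g : vec n -> vec n).
Hypothesis f_grad : is_gradient f g.

Lemma directional_taylor y v e : 0 < e -> exists t0, 0 < t0 /\
  forall t, 0 < t <= t0 ->
    Rabs (f (vadd y (vscale t v)) - f y - t * dot (g y) v) <= t * e.
Proof.
move=> e_gt0; have [vv0|vv_neq0] := Req_dec (dot v v) 0.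
  exists 1; split => [|t [t_gt0 _]]; first lra.
  rewrite (dot_eq0 vv0) vadd_vscale_vzero dot_vzero_r.
  have -> : f y - f y - t * 0 = 0 by ring.
  by rewrite Rabs_R0; apply: Rmult_le_pos; lra.
have N_gt0 := norm2_gt0 vv_neq0; set N := norm2 v in N_gt0.
have [delta [delta_gt0 taylor]] := f_grad y (Rdiv_lt_0_compat _ _ e_gt0 N_gt0).
exists (delta / (2 * N)); split => [|t [t_gt0 t_le]].
  by apply: Rdiv_lt_0_compat; lra.
have tN : norm2 (vscale t v) = t * N by rewrite norm2_vscale Rabs_pos_eq //; lra.
have tN_lt : t * N < delta.
  have : t * N <= delta / (2 * N) * N by apply: Rmult_le_compat_r; lra.
  have -> : delta / (2 * N) * N = delta / 2 by field; lra.
  lra.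
have -> : t * e = e / N * norm2 (vscale t v) by rewrite tN; field; lra.
by rewrite -dot_vscale_r; apply: taylor; rewrite tN; nra.
Qed.

(* The gradient of an L-Lipschitz function has squared norm at most L^2:
   moving along g y, t |g y|^2 - o(t) <= f(y + t g y) - f y <= L t |g y|. *)
Lemma gradient_sq_le L : lipschitz L f -> forall y, dot (g y) (g y) <= L ^ 2.
Proof.
move=> f_lip y; set p := dot (g y) (g y).
have [p0|p_neq0] := Req_dec p 0; first by rewrite p0; exact: pow2_ge_0.
have N_gt0 := norm2_gt0 p_neq0; have N2 : norm2 (g y) ^ 2 = p := norm2_sq (g y).
set N := norm2 (g y) in N_gt0 N2.
suff N_le : N <= L by rewrite -N2; apply: pow_incr; lra.
apply: (Rmult_le_reg_r N) => //; apply: Rle_plus_epsilon => e e_gt0.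
have [t0 [t0_gt0 taylor]] := directional_taylor y (g y) e_gt0.
have := taylor t0 ltac:(lra); have := f_lip (vadd y (vscale t0 (g y))) y.
have -> : vsub (vadd y (vscale t0 (g y))) y = vscale t0 (g y).
  by apply: functional_extensionality => i; rewrite /vsub /vadd; ring.
rewrite norm2_vscale (Rabs_pos_eq t0); last lra.
move=> /(Rle_trans _ _ _ (Rle_abs _)) lip /Rabs_le_lower tay.
rewrite -/N in lip; rewrite -/p -N2 in tay; apply: (Rmult_le_reg_l t0) => //; nra.
Qed.

Section Convex.
Hypothesis f_convex : convex f.

Lemma gradient_inequality y w : f y + dot (g y) (vsub w y) <= f w.
Proof.
set h := vsub w y; apply: Rle_plus_epsilon => e e_gt0.
have [t0 [t0_gt0 taylor]] := directional_taylor y h e_gt0.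
set t := Rmin 1 t0.
have t_gt0 : 0 < t by apply: Rmin_glb_lt; lra.
have t_le1 : t <= 1 by apply: Rmin_l.
have := taylor t (conj t_gt0 (Rmin_r 1 t0)).
have := f_convex w y (conj (Rlt_le _ _ t_gt0) t_le1); rewrite convex_comb -/h.
move=> conv /Rabs_le_lower tay.
apply: (Rmult_le_reg_l t) => //; nra.
Qed.

Lemma gradient_in_dom_conj y : in_dom_conj f (g y).
Proof.
exists (dot y (g y) - f y) => w.
by have := gradient_inequality y w; rewrite dot_vsub_r !(dot_sym (g y)); lra.
Qed.

Lemma gradient_monotone x y : 0 <= dot (vsub (g x) (g y)) (vsub x y).
Proof.
have := gradient_inequality x y; have := gradient_inequality y x.
rewrite dot_vsub_l !dot_vsub_r; lra.
Qed.

End Convex.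

Lemma first_order_condition y0 v b c :
  (forall t, 0 < t -> 0 <= f (vadd y0 (vscale t v)) - f y0 + t * b + t ^ 2 * c) ->
  0 <= dot (g y0) v + b.
Proof.
move=> growth; apply: Rle_plus_epsilon => e e_gt0.
have [t0 [t0_gt0 taylor]] := directional_taylor y0 v (ltac:(lra) : 0 < e / 2).
have c1_gt0 : 0 < Rabs c + 1 by have := Rabs_pos c; lra.
set t := Rmin t0 (e / (2 * (Rabs c + 1))).
have t_gt0 : 0 < t by apply: Rmin_glb_lt => //; apply: Rdiv_lt_0_compat; lra.
have tc_le : t * c <= e / 2.
  have : t * (Rabs c + 1) <= e / 2.
    have -> : e / 2 = e / (2 * (Rabs c + 1)) * (Rabs c + 1) by field; lra.
    by apply: Rmult_le_compat_r; [lra | apply: Rmin_r].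
  by have := Rle_abs c; nra.
have := taylor t (conj t_gt0 (Rmin_l _ _)) => /(Rle_trans _ _ _ (Rle_abs _)) tay.
have := growth t t_gt0 => grow.
apply: (Rmult_le_reg_l t) => //; nra.
Qed.

Lemma minimizer_first_order k p (M : vec k -> vec n) (N : vec k -> vec p) x lam :
  (forall x h t, M (vadd x (vscale t h)) = vadd (M x) (vscale t (M h))) ->
  (forall x h t, N (vadd x (vscale t h)) = vadd (N x) (vscale t (N h))) ->
  is_minimizer (fun x => f (M x) + lam / 2 * norm2 (N x) ^ 2) x ->
  forall h, 0 <= dot (g (M x)) (M h) + lam * dot (N x) (N h).
Proof.
move=> M_lin N_lin x_min h.
apply: (first_order_condition (c := lam / 2 * dot (N h) (N h))) => t t_gt0.
have := x_min (vadd x (vscale t h)); rewrite M_lin N_lin !norm2_sq.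
rewrite !dot_vadd_l !dot_vadd_r !dot_vscale_l !dot_vscale_r (dot_sym (N h) (N x)).
lra.
Qed.

End Differentiable.
End ConvexAnalysis.
Import ConvexAnalysis.

Module SketchEstimate.
Import mathcomp.algebra_tactics.ring mathcomp.algebra_tactics.lra.
Import Order.TTheory GRing.Theory Num.Theory.
Local Open Scope ring_scope.

(* The algebraic core of the proof, for abstract vectors satisfying the
   optimality, monotonicity and boundedness facts established later:
   xs, al play x* and alpha*, zs, zh play z* and z^. *)
Section Estimate.
Variables (n d m : nat) (A : 'M[R]_(n, d)) (S : 'M[R]_(d, m)) (X : 'M[R]_m).
Variables (lam L sig Zf : R) (xs : 'cV[R]_d) (al : 'cV[R]_m) (zs zh : 'cV[R]_n).
Hypothesis lam_gt0 : 0 < lam.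
Hypotheses (Zf_ge0 : 0 <= Zf) (Zf_le_sig : Zf <= sig).
Hypothesis HX : penrose (S^T *m S) X.
Hypothesis AT_bound : forall v, ip (A^T *m v) (A^T *m v) <= sig ^+ 2 * ip v v.
Hypotheses (zs_bound : ip zs zs <= L ^+ 2) (zh_bound : ip zh zh <= L ^+ 2).
Hypothesis full_opt : A^T *m zs + lam *: xs = 0.
Hypothesis sketch_opt : S^T *m (A^T *m zh + lam *: (S *m al)) = 0.
Hypothesis monotone : 0 <= ip (zh - zs) (A *m (S *m al - xs)).
Hypothesis Zf_bound :
  ip (zh - zs) (A *m (QSm S X *m (A^T *m (zh - zs)))) <= Zf ^+ 2 * ip (zh - zs) (zh - zs).

Local Notation P := (PSm S X).
Local Notation Q := (QSm S X).
Local Notation b := (A^T *m zs).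
Local Notation delta := (A^T *m zh - A^T *m zs).

Lemma full_solution : xs = - lam^-1 *: b.
Proof.
have lam_neq0 : lam != 0 by rewrite gt_eqF.
apply: (scalerI lam_neq0); rewrite scalerA mulrN mulfV // scaleN1r.
by apply/eqP; rewrite -addr_eq0 addrC full_opt.
Qed.

(* lam S alpha* = - P A^T z^: apply P_S to the sketched stationarity. *)
Lemma sketch_solution : lam *: (S *m al) = - (P *m (A^T *m zh)).
Proof.
have : P *m (A^T *m zh + lam *: (S *m al)) = 0 by rewrite /PSm -mulmxA sketch_opt mulmx0.
rewrite mulmxDr -scalemxAr [P *m (S *m al)]mulmxA PS_S // addrC => /eqP.
by rewrite addr_eq0 => /eqP.
Qed.

(* Monotonicity of grad f, rewritten with the two solutions:
   delta^T P delta <= delta^T Q b. *)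
Lemma projected_gap_le : ip delta (P *m delta) <= ip delta (Q *m b).
Proof.
have : 0 <= ip delta (lam *: (S *m al - xs)).
  by rewrite ipZr; apply: mulr_ge0; [exact: ltW | rewrite -mulmxBr -ip_trmx].
rewrite scalerBr sketch_solution full_solution scalerA mulrN mulfV ?gt_eqF //.
rewrite scaleN1r opprK.
have -> : - (P *m (A^T *m zh)) + b = - (P *m delta) + Q *m b.
  by rewrite /QSm mulmxBr mulmxBl mul1mx opprB [RHS]addrC addrA subrK addrC.
by rewrite ipDr ipNr addrC subr_ge0.
Qed.

(* The definition of Z_f together with |z^ - z*|^2 <= 4 L^2. *)
Lemma residual_gap_le : ip delta (Q *m delta) <= 4 * L ^+ 2 * Zf ^+ 2.
Proof.
have dz_le : ip (zh - zs) (zh - zs) <= 4 * L ^+ 2.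
  apply: (le_trans (ip_sub_le zh zs)).
  have -> : 4 * L ^+ 2 = 2 * L ^+ 2 + 2 * L ^+ 2 by ring.
  by rewrite lerD // ler_pM2l.
rewrite -mulmxBr -ip_trmx; apply: (le_trans Zf_bound).
by rewrite mulrC ler_wpM2r ?sqr_ge0.
Qed.

(* Cauchy-Schwarz through the projector Q, with |Q b| <= |b| <= sig L. *)
Lemma cross_term_le : ip delta (Q *m b) <= 2 * L ^+ 2 * Zf * sig.
Proof.
have sig_ge0 : 0 <= sig by apply: le_trans Zf_le_sig.
have bound_ge0 : 0 <= 2 * L ^+ 2 * Zf * sig.
  by rewrite mulr_ge0 // mulr_ge0 // mulr_ge0 ?sqr_ge0.
have Qb_le : ip (Q *m b) (Q *m b) <= sig ^+ 2 * L ^+ 2.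
  apply: (le_trans (QS_contraction HX b)); apply: (le_trans (AT_bound zs)).
  by rewrite ler_wpM2l ?sqr_ge0.
have sq_le : ip delta (Q *m b) ^+ 2 <= (2 * L ^+ 2 * Zf * sig) ^+ 2.
  rewrite (ip_QS HX); apply: (le_trans (ip_CauchySchwarz _ _)).
  rewrite -(ip_QS HX).
  have -> : (2 * L ^+ 2 * Zf * sig) ^+ 2 = (4 * L ^+ 2 * Zf ^+ 2) * (sig ^+ 2 * L ^+ 2).
    by ring.
  apply: ler_pM => //; last exact: residual_gap_le.
    by rewrite (ip_QS HX) ip_ge0.
  exact: ip_ge0.
have [C_le0|C_gt0] := lerP (ip delta (Q *m b)) 0; first exact: le_trans C_le0 _.
by rewrite -(ler_pXn2r (n := 2)) // ?nnegrE ?ltW.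
Qed.

(* |A^T (z^ - z* )|^2 <= 6 L^2 sig Z_f, splitting along P and Q. *)
Lemma dual_gap_sq_le : ip delta delta <= 6 * L ^+ 2 * sig * Zf.
Proof.
have resid : ip delta (Q *m delta) <= 4 * L ^+ 2 * Zf * sig.
  apply: (le_trans residual_gap_le).
  have -> : 4 * L ^+ 2 * Zf ^+ 2 = 4 * L ^+ 2 * Zf * Zf by ring.
  by rewrite ler_wpM2l // mulr_ge0 // mulr_ge0 ?sqr_ge0.
have -> : 6 * L ^+ 2 * sig * Zf = 2 * L ^+ 2 * Zf * sig + 4 * L ^+ 2 * Zf * sig.
  by ring.
rewrite (ip_split S X); apply: lerD => //.
exact: le_trans projected_gap_le cross_term_le.
Qed.

(* Since x~ - x* = - delta / lam, the squared error is at most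
   6 L^2 sig Z_f / lam^2. *)
Lemma sketch_error_sq_le :
  ip (- lam^-1 *: (A^T *m zh) - xs) (- lam^-1 *: (A^T *m zh) - xs)
    <= 6 * L ^+ 2 * sig * Zf / lam ^+ 2.
Proof.
rewrite full_solution -scalerBr ipZl ipZr.
have -> : - lam^-1 * (- lam^-1 * ip delta delta) = ip delta delta / lam ^+ 2.
  by field; rewrite gt_eqF.
by rewrite ler_wpM2r ?invr_ge0 ?sqr_ge0 ?dual_gap_sq_le.
Qed.

End Estimate.
End SketchEstimate.
Import SketchEstimate.

Module RidgeSketch.
Import Order.TTheory GRing.Theory Num.Theory.
Local Open Scope R_scope.

Lemma mv_linear n d (A : mat n d) x h t :
  mv A (vadd x (vscale t h)) = vadd (mv A x) (vscale t (mv A h)).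
Proof.
by apply: cv_inj; rewrite cv_mv !cv_vadd !cv_vscale !cv_mv mulmxDr -scalemxAr.
Qed.

Lemma full_stationarity n d (A : mat n d) f g lam xs :
  is_gradient f g ->
  is_minimizer (fun x : vec d => f (mv A x) + lam / 2 * norm2 x ^ 2) xs ->
  ((mx A)^T *m cv (g (mv A xs)) + lam *: cv xs = 0)%R.
Proof.
move=> f_grad xs_min; apply: ip_nonneg_eq0 => v.
have := minimizer_first_order (N := id) f_grad (@mv_linear _ _ A)
  (fun _ _ _ => erefl) xs_min (fun i => v i 0%R).
by rewrite !dot_ip cv_mv cv_col ipDl ipZl -ip_trmx => /RleP.
Qed.

Lemma sketched_stationarity n d m (A : mat n d) (S : mat d m) f g lam al :
  is_gradient f g ->
  is_minimizer (fun a : vec m => f (mv A (mv S a)) + lam / 2 * norm2 (mv S a) ^ 2) al ->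
  ((mx S)^T *m ((mx A)^T *m cv (g (mv A (mv S al))) + lam *: (mx S *m cv al)) = 0)%R.
Proof.
move=> f_grad al_min; apply: ip_nonneg_eq0 => v.
have AS_lin x h t : mv A (mv S (vadd x (vscale t h))) =
    vadd (mv A (mv S x)) (vscale t (mv A (mv S h))) by rewrite !mv_linear.
have := minimizer_first_order f_grad AS_lin (@mv_linear _ _ S) al_min (fun i => v i 0%R).
by rewrite !dot_ip !cv_mv cv_col -ip_trmx ipDl ipZl -!ip_trmx => /RleP.
Qed.

Lemma singular_value_tr_bound n d (A : mat n d) sig :
  is_largest_singular_value A sig ->
  forall v : 'cV[R]_n, (ip ((mx A)^T *m v) ((mx A)^T *m v) <= sig ^+ 2 * ip v v)%R.
Proof.
move=> [_ [_ eig_le]]; apply: operator_bound_tr; first exact: sqr_ge0.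
apply: eigen_operator_bound => mu v v_neq0 eig; apply/RleP; rewrite -RpowE.
apply: (eig_le mu (fun i => v i 0%R)).
  by move=> v0; move/eqP: v_neq0; apply; rewrite -(cv_col v) v0 cv_vzero.
by apply: cv_inj; rewrite cv_mv cv_vscale cv_col mx_mm mx_tr.
Qed.

Lemma Zf_form_ip n d m (A : mat n d) (S : mat d m) (Mp : mat m m) (D : vec n) :
  dot D (mv A (mv (PSperp S Mp) (mv (tr A) D))) =
  ip (cv D) (mx A *m (QSm (mx S) (mx Mp) *m ((mx A)^T *m cv D))).
Proof. by rewrite dot_ip !cv_mv mx_PSperp mx_tr. Qed.

Lemma sqrt_le_of_le x B : 0 <= B -> x <= B ^ 2 -> sqrt x <= B.
Proof. by move=> B_ge0 x_le; rewrite -(sqrt_pow2 B B_ge0); exact: sqrt_le_1_alt. Qed.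

Lemma le_of_sqrt_le x B : 0 <= B -> sqrt x <= B -> x <= B ^ 2.
Proof.
move=> B_ge0 sx_le; have [x_le0|x_gt0] := Rle_lt_dec x 0.
  by have := pow2_ge_0 B; lra.
rewrite -(pow2_sqrt x); last exact: Rlt_le.
by apply: pow_incr; split => //; exact: sqrt_pos.
Qed.

Section ZfBounds.
Variables (n d m : nat) (f : vec n -> R) (zs : vec n) (A : mat n d).
Variables (S : mat d m) (Mp : mat m m) (Zf : R).
Hypothesis Zf_lub : is_lub (Zf_values f zs A S Mp) Zf.

Lemma Zf_nonneg : 0 <= Zf.
Proof. by apply: (proj1 Zf_lub); left. Qed.

Lemma Zf_form_le z : in_dom_conj f z ->
  dot (vsub z zs) (mv A (mv (PSperp S Mp) (mv (tr A) (vsub z zs))))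
    <= Zf ^ 2 * dot (vsub z zs) (vsub z zs).
Proof.
move=> z_dom; set D := vsub z zs.
have [DD0|DD_neq0] := Req_dec (dot D D) 0.
  by rewrite DD0 (dot_eq0 DD0) dot_sym dot_vzero_r Rmult_0_r; exact: Rle_refl.
have N_gt0 : 0 < norm2 D ^ 2 by rewrite norm2_sq; have := dot_ge0 D; lra.
rewrite -norm2_sq; apply: (Rmult_le_reg_r (/ norm2 D ^ 2)); first exact: Rinv_0_lt_compat.
rewrite Rmult_assoc Rinv_r ?Rmult_1_r; last lra.
apply: le_of_sqrt_le Zf_nonneg _; apply: (proj1 Zf_lub); right.
exists z; split => //=; split => //.
by move=> D0; apply: DD_neq0; rewrite /D D0 dot_vzero_r.
Qed.

(* Z_f <= sigma_1, because P_S^perp is a contraction. *)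
Lemma Zf_le_sigma sig : 0 <= sig ->
  (forall v : 'cV[R]_n, ip ((mx A)^T *m v) ((mx A)^T *m v) <= sig ^+ 2 * ip v v)%R ->
  penrose ((mx S)^T *m mx S) (mx Mp) -> Zf <= sig.
Proof.
move=> sig_ge0 AT_bound HX; apply: (proj2 Zf_lub) => r [->|[z [_ [D_neq0 ->]]]] //.
set D := vsub z zs.
have DD_neq0 : dot D D <> 0 by move=> /dot_eq0.
have DD_gt0 : 0 < norm2 D ^ 2 by rewrite norm2_sq; have := dot_ge0 D; lra.
apply: sqrt_le_of_le sig_ge0 _; apply: (Rmult_le_reg_r (norm2 D ^ 2)) => //.
rewrite /Rdiv Rmult_assoc Rinv_l ?Rmult_1_r; last lra.
rewrite norm2_sq Zf_form_ip ip_trmx (ip_QS HX) RpowE dot_ip; apply/RleP.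
exact: le_trans (QS_contraction HX _) (AT_bound _).
Qed.

(* In dimension n = 0 every vector is zero, so Z_f = 0. *)
Lemma Zf_dim0 : n = 0%nat -> Zf = 0.
Proof.
move=> n0; apply: Rle_antisym; last exact: Zf_nonneg.
apply: (proj2 Zf_lub) => r [->|[z [_ [D_neq0 _]]]]; first exact: Rle_refl.
case: D_neq0; apply: functional_extensionality => i.
exfalso; have := ltn_ord i; move: (nat_of_ord i) => k.
by rewrite n0.
Qed.

End ZfBounds.

Lemma lipschitz_nonneg n (f : vec n -> R) L : (0 < n)%N -> lipschitz L f -> 0 <= L.
Proof.
move=> n_gt0 f_lip; pose u := vsub vzero (fun _ : 'I_n => 1).
have uu_neq0 : dot u u <> 0.
  move=> /dot_eq0 /(f_equal (fun w => w (Ordinal n_gt0))); rewrite /u /vsub /vzero; lra.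
have := f_lip vzero (fun _ => 1); have := norm2_gt0 uu_neq0.
have := Rabs_pos (f vzero - f (fun _ => 1)); rewrite -/u; nra.
Qed.

Lemma sketch_error_dot n d m (A : mat n d) (S : mat d m) (Mp : mat m m)
    (lam L sig Zf : R) (xs : vec d) (al : vec m) (zs zh : vec n) :
  0 < lam -> 0 <= Zf -> Zf <= sig ->
  penrose ((mx S)^T *m mx S) (mx Mp) ->
  (forall v : 'cV[R]_n, ip ((mx A)^T *m v) ((mx A)^T *m v) <= sig ^+ 2 * ip v v)%R ->
  dot zs zs <= L ^ 2 -> dot zh zh <= L ^ 2 ->
  ((mx A)^T *m cv zs + lam *: cv xs = 0)%R ->
  ((mx S)^T *m ((mx A)^T *m cv zh + lam *: (mx S *m cv al)) = 0)%R ->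
  0 <= dot (vsub zh zs) (vsub (mv A (mv S al)) (mv A xs)) ->
  dot (vsub zh zs) (mv A (mv (PSperp S Mp) (mv (tr A) (vsub zh zs))))
    <= Zf ^ 2 * dot (vsub zh zs) (vsub zh zs) ->
  let err := vsub (vscale (- / lam) (mv (tr A) zh)) xs in
  dot err err <= 6 * L ^ 2 * sig * Zf / lam ^ 2.
Proof.
move=> lam_gt0 Zf_ge0 Zf_le HX AT_bound zs_le zh_le full_opt sketch_opt mono Zf_zh err.
have lam_gtR : (0 < lam)%R by apply/RltP.
have Zf_geR : (0 <= Zf)%R by apply/RleP.
have Zf_leR : (Zf <= sig)%R by apply/RleP.
have zs_leR : (ip (cv zs) (cv zs) <= L ^+ 2)%R by apply/RleP; rewrite -dot_ip -RpowE.
have zh_leR : (ip (cv zh) (cv zh) <= L ^+ 2)%R by apply/RleP; rewrite -dot_ip -RpowE.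
have monoR : (0 <= ip (cv zh - cv zs) (mx A *m (mx S *m cv al - cv xs)))%R.
  by apply/RleP; rewrite mulmxBr -!cv_mv -!cv_vsub -dot_ip.
have Zf_zhR : (ip (cv zh - cv zs) (mx A *m (QSm (mx S) (mx Mp) *m ((mx A)^T *m (cv zh - cv zs))))
    <= Zf ^+ 2 * ip (cv zh - cv zs) (cv zh - cv zs))%R.
  by apply/RleP; rewrite -cv_vsub -Zf_form_ip -dot_ip -RpowE.
have := sketch_error_sq_le lam_gtR Zf_geR Zf_leR HX AT_bound zs_leR zh_leR full_opt
  sketch_opt monoR Zf_zhR.
rewrite /err dot_ip cv_vsub cv_vscale cv_mv mx_tr -!RpowE => /RleP.
by have -> : (6%:R : R)%R = 6 by rewrite IZRposE INRE.
Qed.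

(* Taking square roots; if L < 0 the space is trivial and s = sigma_1 Z_f
   vanishes. *)
Lemma norm2_le_of_dot n (u : vec n) (L lam sig Zf : R) : 0 < lam -> 0 <= sig * Zf ->
  (0 <= L \/ sig * Zf = 0) -> dot u u <= 6 * L ^ 2 * sig * Zf / lam ^ 2 ->
  norm2 u <= 6 * L / lam * sqrt (sig * Zf).
Proof.
move=> lam_gt0 s_ge0 HL; rewrite Rmult_assoc.
move: (sig * Zf) s_ge0 HL => s s_ge0 [L_ge0|s0] uu_le; last first.
  have uu0 : dot u u = 0.
    by apply: Rle_antisym; [move: uu_le; rewrite s0 Rmult_0_r /Rdiv Rmult_0_l | exact: dot_ge0].
  by rewrite /norm2 uu0 s0 sqrt_0 Rmult_0_r; exact: Rle_refl.
apply: sqrt_le_of_le.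
  apply: Rmult_le_pos; last exact: sqrt_pos.
  by apply: Rmult_le_pos; [lra | apply/Rlt_le/Rinv_0_lt_compat].
apply: (Rle_trans _ _ _ uu_le).
have -> : (6 * L / lam * sqrt s) ^ 2 = 36 * L ^ 2 * s / lam ^ 2.
  by rewrite Rpow_mult_distr pow2_sqrt //; field; lra.
apply: Rmult_le_compat_r; first by apply/Rlt_le/Rinv_0_lt_compat/pow_lt.
by have := pow2_ge_0 L; nra.
Qed.

End RidgeSketch.
Import RidgeSketch.
Local Open Scope R_scope.

Theorem theorem4 (n d m : nat) (A : mat n d) (sigma1 : R) (S : mat d m)
  (lambda L : R) (f : vec n -> R) (gradf : vec n -> vec n)
  (xstar : vec d) (alphastar : vec m) (Mp : mat m m) (Zf : R) :
  is_largest_singular_value A sigma1 ->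
  0 < lambda ->
  convex f -> is_gradient f gradf -> lipschitz L f ->
  is_minimizer (fun x : vec d => f (mv A x) + lambda / 2 * norm2 x ^ 2) xstar ->
  is_minimizer (fun a : vec m => f (mv A (mv S a)) + lambda / 2 * norm2 (mv S a) ^ 2)
    alphastar ->
  is_pinv (mm (tr S) S) Mp ->
  is_lub (Zf_values f (gradf (mv A xstar)) A S Mp) Zf ->
  let xtilde := vscale (- / lambda) (mv (tr A) (gradf (mv A (mv S alphastar)))) in
  norm2 (vsub xtilde xstar) <= 6 * L / lambda * sqrt (sigma1 * Zf).
Proof.
move=> sigma1_max lam_gt0 f_conv f_grad f_lip xs_min al_min S_pinv Zf_lub xtilde.
have HX := pinv_penrose S_pinv.
have AT_bound := singular_value_tr_bound sigma1_max.
have sig_ge0 : 0 <= sigma1 := proj1 sigma1_max.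
have Zf_ge0 := Zf_nonneg Zf_lub.
have Zf_le := Zf_le_sigma Zf_lub sig_ge0 AT_bound HX.
have L_sign : 0 <= L \/ sigma1 * Zf = 0.
  have [n0|n_gt0] := posnP n; last by left; exact: lipschitz_nonneg n_gt0 f_lip.
  by right; rewrite (Zf_dim0 Zf_lub n0) Rmult_0_r.
apply: norm2_le_of_dot => //; first exact: Rmult_le_pos.
apply: (sketch_error_dot (al := alphastar) (zs := gradf (mv A xstar)))
  Zf_ge0 Zf_le HX AT_bound _ _ _ _ _ _ => //.
- exact: (gradient_sq_le f_grad f_lip).
- exact: (gradient_sq_le f_grad f_lip).
- exact: full_stationarity f_grad xs_min.
- exact: sketched_stationarity f_grad al_min.
- exact: (gradient_monotone f_grad f_conv).
- exact: (Zf_form_le Zf_lub (gradient_in_dom_conj f_grad f_conv _)).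
Qed.
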